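(* Let $A$ be a setoid, $B$ a setoid family over $A$ and $(C,a_C)$ a $P_B$-algebra. Let $w,w':W$, $\gamma:w\approx_Ww'$ and $k:\mathsf{ImS}\,w\Rightarrow C$. Then there is a term of type \[ \mathsf{RecDef}\,w\,k\to\mathsf{RecDef}\,w'\,(k\circ\mathsf{ImS}_{\gamma^{-1}}), \] where $\gamma^{-1}:w'\approx_Ww$ is obtained from $\gamma$ by symmetry.
   Context: Setting: intensional Martin-Löf type theory with $\Pi$-types, record types and a universe $\mathsf U$ closed under $\Pi$ and containing intensional $\Sigma$-types, identity types, unit type, W-types and dependent W-types; propositions-as-types. For a W-type with constructor $\mathsf{sup}$, $\mathsf n,\mathsf b$ are node and branch functions. $\mathsf{DW}_{I,X,Y,d}:I\to\mathsf U$ denotes the dependent W-type: the inductive family with constructor $\mathsf{dsup}\,i\,x\,f:\mathsf{DW}\,i$ for $x:X\,i$ and $f:\prod_{y:Y\,i\,x}\mathsf{DW}(d\,i\,x\,y)$, and the usual dependent eliminator. A setoid $X$: type $X_0:\mathsf U$ with relation $\approx_X$ and proofs of reflexivity, symmetry, transitivity; $x:X$ means $x:X_0$. Extensional function $f:X\Rightarrow Y$: $f_0:X_0\to Y_0$ with a proof that it preserves $\approx$; $X\Rightarrow Y$ is a setoid with pointwise equality; $\circ$ is composition. A setoid family $B$ over setoid $A$: setoids $B\,a$ and transports $B_\alpha:B\,a\Rightarrow B\,a'$ for $\alpha:a\approx_Aa'$, functorial up to $\approx$, with $B_\alpha\approx B_{\alpha'}$ for all $\alpha,\alpha'$. Write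 $b\approx_\alpha b'$ for $B_\alpha b\approx b'$. $P_BX$: setoid with underlying type $\sum_{a:A}(B\,a\Rightarrow X)$ and $(a,k)\approx(a',k'):=\sum_{\alpha:a\approx a'}k\approx k'\circ B_\alpha$. A $P_B$-algebra is a setoid $C$ with extensional $a_C:P_BC\Rightarrow C$. $W$: with $A_0,B_0$ underlying types and $\mathsf W:=\mathsf W(A_0,B_0)$, $\approx^Bw\,w':=\mathsf{DW}_{I,X,Y,d}(w,w')$ with $I:=\mathsf W\times\mathsf W$, $X(w,w'):=\mathsf nw\approx_A\mathsf nw'$, $Y(w,w')\alpha:=\sum_{b,b'}b\approx_\alpha b'$, $d(w,w')\alpha(b,b',\beta):=(\mathsf bwb,\mathsf bw'b')$. $W$: underlying type $\sum_{w:\mathsf W}\approx^Bw\,w$, $(w,\_)\approx_W(w',\_):=\approx^Bw\,w'$. $\mathsf n$, $\mathsf b$ induce extensional $\mathsf n:W\Rightarrow A$ and $\mathsf b\,w:B(\mathsf nw)\Rightarrow W$; for $\gamma:w\approx_Ww'$, $\mathsf n^\ast\gamma:\mathsf nw\approx_A\mathsf nw'$ denotes extensionality of $\mathsf n$ applied to $\gamma$. $\mathsf{ImS}\,w$ (for $w:W$): setoid with underlying type $B_0(\mathsf nw)$ and $b\approx b':=\mathsf bwb\approx_W\mathsf bwb'$; transport $\mathsf{ImS}_\gamma s:=B_{\mathsf n^\ast\gamma}s$. $e_w:B(\mathsf nw)\Rightarrow\mathsf{ImS}\,w$ has identity underlying function. A family $F:\prod_{s:\mathsf{ImS}w}\mathsf{ImS}(\mathsf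 bws)\Rightarrow C$ is coherent if $F\,s\approx(F\,s')\circ\mathsf{ImS}_\sigma$ for all $\sigma:s\approx s'$ in $\mathsf{ImS}\,w$; $\mathsf{CohMaps}\,w$ is the setoid of coherent families with pointwise equality. For $F:\mathsf{CohMaps}\,w$, $\mathsf{recst}\,w\,F:\mathsf{ImS}\,w\Rightarrow C$ is the extensional function $s\mapsto a_C(\mathsf n(\mathsf bws),(F\,s)\circ e_{\mathsf bws})$. For $k:\mathsf{ImS}\,w\Rightarrow C$, $\mathsf{RecDef}\,w\,k:=\mathsf{DW}_{I',X',Y',d'}(w,k)$ with $I':=\sum_{w:W}(\mathsf{ImS}w\Rightarrow C)$, $X'(w,k):=\sum_{F:\mathsf{CohMaps}w}k\approx\mathsf{recst}\,w\,F$, $Y'(w,k)(F,\_):=$ underlying type of $\mathsf{ImS}\,w$, $d'(w,k)(F,\_)s:=(\mathsf bws,F\,s)$. *)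

Set Implicit Arguments.
Unset Strict Implicit.

Record setoid := Setoid {
  car :> Type;
  eqv : car -> car -> Type;
  srefl : forall x, eqv x x;
  ssym : forall x y, eqv x y -> eqv y x;
  strans : forall x y z, eqv x y -> eqv y z -> eqv x z }.
Arguments eqv {s} x y.
Arguments srefl {s} x.
Arguments ssym {s x y} _.
Arguments strans {s x y z} _ _.
Notation "x =s= y" := (eqv x y) (at level 70).

Record ext (X Y : setoid) := Ext {
  ap :> X -> Y;
  ap_ext : forall x x', x =s= x' -> ap x =s= ap x' }.
Arguments Ext {X Y} ap ap_ext.
Arguments ap_ext {X Y} e {x x'} _.

Definition ext_setoid (X Y : setoid) : setoid :=
  @Setoid (ext X Y) (fun f g => forall x, f x =s= g x)
    (fun f x => srefl (f x))
    (fun f g H x => ssym (H x))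
    (fun f g h H1 H2 x => strans (H1 x) (H2 x)).

Definition comp {X Y Z : setoid} (g : ext Y Z) (f : ext X Y) : ext X Z :=
  Ext (fun x => g (f x)) (fun x x' h => ap_ext g (ap_ext f h)).

Record fam (A : setoid) := Fam {
  fib :> A -> setoid;
  tr : forall a a' : A, a =s= a' -> ext (fib a) (fib a');
  tr_refl : forall (a : A) (b : fib a), tr (srefl a) b =s= b;
  tr_trans : forall (a a' a'' : A) (p : a =s= a') (q : a' =s= a'') (b : fib a),
      tr q (tr p b) =s= tr (strans p q) b;
  tr_irr : forall (a a' : A) (p q : a =s= a') (b : fib a), tr p b =s= tr q b }.
Arguments tr {A} f {a a'} _.
Arguments tr_refl {A} f {a} b.
Arguments tr_trans {A} f {a a' a''} p q b.
Arguments tr_irr {A} f {a a'} p q b.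

Section FamFacts.
Variables (A : setoid) (B : fam A).
Definition tr_any_refl (a : A) (p : a =s= a) (b : B a) : tr B p b =s= b :=
  strans (tr_irr B p (srefl a) b) (tr_refl B b).
Definition tr_inv (a a' : A) (p : a =s= a') (b : B a') :
  tr B p (tr B (ssym p) b) =s= b :=
  strans (tr_trans B (ssym p) p b) (tr_any_refl _ b).
End FamFacts.
Arguments tr_any_refl {A} B {a} p b.
Arguments tr_inv {A} B {a a'} p b.

Definition PB {A : setoid} (B : fam A) (X : setoid) : setoid.
Proof.
  refine (@Setoid {a : A & ext (B a) X}
    (fun u v => {p : projT1 u =s= projT1 v &
        @eqv (ext_setoid _ _) (projT2 u) (comp (projT2 v) (tr B p))}) _ _ _).
  - intros [a k]. exists (srefl a). intro b. simpl.
    exact (ap_ext k (ssym (tr_refl B b))).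
  - intros [a k] [a' k'] [p H]. simpl in *. exists (ssym p). intro b'. simpl.
    exact (strans (ap_ext k' (ssym (tr_inv B p b'))) (ssym (H (tr B (ssym p) b')))).
  - intros [a k] [a' k'] [a'' k''] [p H1] [q H2]. simpl in *.
    exists (strans p q). intro b. simpl.
    exact (strans (H1 b) (strans (H2 (tr B p b)) (ap_ext k'' (tr_trans B p q b)))).
Defined.

Local Unset Implicit Arguments.
Inductive Wt (A0 : Type) (B0 : A0 -> Type) : Type :=
  sup : forall a : A0, (B0 a -> Wt A0 B0) -> Wt A0 B0.
Arguments sup {A0 B0} a f.

Definition node {A0 B0} (w : Wt A0 B0) : A0 := match w with sup a _ => a end.
Definition br {A0 B0} (w : Wt A0 B0) : B0 (node w) -> Wt A0 B0 :=
  match w with sup a f => f end.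

Inductive DW (I : Type) (X : I -> Type) (Y : forall i, X i -> Type)
    (d : forall i (x : X i), Y i x -> I) : I -> Type :=
  dsup : forall (i : I) (x : X i), (forall y : Y i x, DW I X Y d (d i x y)) -> DW I X Y d i.
Arguments dsup {I X Y d} i x f.

Definition DWnode {I X Y d} {i : I} (e : @DW I X Y d i) : X i :=
  match e in DW _ _ _ _ j return X j with dsup j x f => x end.
Definition DWbr {I X Y d} {i : I} (e : @DW I X Y d i) :
  forall y : Y i (DWnode e), DW I X Y d (d i (DWnode e) y) :=
  match e as e0 in DW _ _ _ _ j
    return forall y : Y j (DWnode e0), DW I X Y d (d j (DWnode e0) y)
  with dsup j x f => f end.

Local Set Implicit Arguments.
Section WSec.
Variables (A : setoid) (B : fam A).

Definition W0 : Type := Wt (car A) (fun a => car (B a)).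
Definition WI : Type := (W0 * W0)%type.
Definition WX (i : WI) : Type := node (fst i) =s= node (snd i).
Definition WY (i : WI) (p : WX i) : Type :=
  {b : B (node (fst i)) & {b' : B (node (snd i)) & tr B p b =s= b'}}.
Definition Wd (i : WI) (p : WX i) (y : WY p) : WI :=
  (br (fst i) (projT1 y), br (snd i) (projT1 (projT2 y))).

Definition Weq (w w' : W0) : Type := DW WI WX WY Wd (w, w').

Fixpoint Weq_sym (i : WI) (e : DW WI WX WY Wd i) {struct e} : DW WI WX WY Wd (snd i, fst i) :=
  match e in DW _ _ _ _ j return DW WI WX WY Wd (snd j, fst j) with
  | dsup j p f =>
      dsup (snd j, fst j) (ssym p)
        (fun y : WY (i := (snd j, fst j)) (ssym p) =>
           match y with existT _ b (existT _ b' h) =>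
             Weq_sym (f (existT _ b' (existT _ b
                 (strans (ap_ext (tr B p) (ssym h)) (tr_inv B p b)))))
           end)
  end.

Fixpoint Weq_trans (i : WI) (e : DW WI WX WY Wd i) {struct e} :
  forall w'', DW WI WX WY Wd (snd i, w'') -> DW WI WX WY Wd (fst i, w'') :=
  match e in DW _ _ _ _ j
    return forall w'', DW WI WX WY Wd (snd j, w'') -> DW WI WX WY Wd (fst j, w'')
  with
  | dsup j p f => fun w'' e2 =>
      dsup (fst j, w'') (strans p (DWnode e2))
        (fun y : WY (i := (fst j, w'')) (strans p (DWnode e2)) =>
           match y with existT _ b (existT _ b'' h) =>
             Weq_trans (f (existT _ b (existT _ (tr B p b) (srefl _))))
               (DWbr e2 (existT _ (tr B p b) (existT _ b''
                  (strans (tr_trans B p (DWnode e2) b) h))))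
           end)
  end.

Definition Wset : setoid :=
  @Setoid {w : W0 & Weq w w} (fun u v => Weq (projT1 u) (projT1 v))
    (fun u => projT2 u)
    (fun u v e => Weq_sym e)
    (fun u v z e1 e2 => Weq_trans e1 e2).

Definition nW : ext Wset A :=
  @Ext Wset A (fun u : Wset => node (projT1 u)) (fun u v (e : u =s= v) => DWnode e).

Definition bW (u : Wset) : ext (B (nW u)) Wset.
Proof.
  refine (@Ext (B (nW u)) Wset (fun b => existT (fun w => Weq w w) (br (projT1 u) b)
    (DWbr (projT2 u) (existT _ b (existT _ b (tr_any_refl B _ b))))) _).
  intros b b' h.
  exact (DWbr (projT2 u) (existT _ b (existT _ b' (strans (tr_any_refl B _ b) h)))).
Defined.

Definition ImS (u : Wset) : setoid :=
  @Setoid (B (nW u)) (fun s s' => bW u s =s= bW u s')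
    (fun s => srefl _) (fun s s' h => ssym h) (fun s s' s'' h1 h2 => strans h1 h2).

Definition ImS_tr {u u' : Wset} (g : u =s= u') : ext (ImS u) (ImS u').
Proof.
  refine (@Ext (ImS u) (ImS u') (fun s : ImS u => tr B (ap_ext nW g) s) _).
  intros s s' h.
  pose (L := fun s0 : B (nW u) =>
    DWbr g (existT _ s0 (existT _ (tr B (ap_ext nW g) s0) (srefl _)))
    : bW u s0 =s= bW u' (tr B (ap_ext nW g) s0)).
  exact (strans (s:=Wset) (ssym (L s)) (strans (s:=Wset) h (L s'))).
Defined.

Definition eW (u : Wset) : ext (B (nW u)) (ImS u) :=
  @Ext (B (nW u)) (ImS u) (fun b : B (nW u) => (b : ImS u)) (fun b b' h => ap_ext (bW u) h).

Section Alg.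
Variables (C : setoid) (aC : ext (PB B C) C).

Definition coherent (u : Wset) (F : forall s : ImS u, ext (ImS (bW u s)) C) : Type :=
  forall (s s' : ImS u) (sg : s =s= s'),
    @eqv (ext_setoid _ _) (F s) (comp (F s') (@ImS_tr (bW u s) (bW u s') sg)).

Definition CohMaps (u : Wset) : setoid :=
  @Setoid {F : forall s : ImS u, ext (ImS (bW u s)) C & coherent F}
    (fun F F' => forall s : ImS u, @eqv (ext_setoid _ _) (projT1 F s) (projT1 F' s))
    (fun F s => srefl (s := ext_setoid _ _) _)
    (fun F F' H s => ssym (s := ext_setoid _ _) (H s))
    (fun F F' F'' H1 H2 s => strans (s := ext_setoid _ _) (H1 s) (H2 s)).

Definition recst (u : Wset) (F : CohMaps u) : ext (ImS u) C.
Proof.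
  refine (@Ext (ImS u) C (fun s : ImS u =>
     aC (existT (fun a : A => ext (B a) C) (nW (bW u s))
               (comp (projT1 F s) (eW (bW u s))))) _).
  intros s s' sg. apply (ap_ext aC).
  exists (ap_ext nW sg). intro b. exact (projT2 F s s' sg b).
Defined.

Definition RI : Type := {u : Wset & ext (ImS u) C}.
Definition RX (i : RI) : Type :=
  {F : CohMaps (projT1 i) & @eqv (ext_setoid _ _) (projT2 i) (recst F)}.
Definition RY (i : RI) (x : RX i) : Type := car (ImS (projT1 i)).
Definition Rd (i : RI) (x : RX i) (s : RY x) : RI :=
  existT (fun v : Wset => ext (ImS v) C) (bW (projT1 i) s) (projT1 (projT1 x) s).

Definition RecDef (u : Wset) (k : ext (ImS u) C) : Type :=
  DW RI RX RY Rd (existT (fun v : Wset => ext (ImS v) C) u k).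

End Alg.
End WSec.
Arguments RecDef {A B C} aC u k.
Arguments recst {A B C} aC {u} F.

(* Induction on the RecDef derivation, generalised over the target tree and
   the bisimulation. At a node (F, k ≈ recst F) of the derivation for w, the
   bisimulation g : w ≈ w' matches each immediate subtree b w' s' of w' with
   the subtree b w s of w, where s := ImS_{g⁻¹} s'; precomposing F s with the
   transport along that matching gives a coherent family for w', whose recst is
   recst F ∘ ImS_{g⁻¹}. The subderivations are then transported recursively. *)

Section Transport.
Context {A : setoid} {B : fam A}.

Lemma tr_loop {a a' : A} (p : a =s= a') (q : a' =s= a) (b : B a) :
  tr B q (tr B p b) =s= b.
Proof. exact (strans (tr_trans B p q b) (tr_any_refl B _ b)). Qed.

Lemma tr_path_irr {a0 a1 a2 a3 : A} (p : a0 =s= a1) (q : a1 =s= a2)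
    (r : a0 =s= a3) (r' : a3 =s= a2) (b : B a0) :
  tr B q (tr B p b) =s= tr B r' (tr B r b).
Proof.
  refine (strans (tr_trans B p q b) (strans _ (ssym (tr_trans B r r' b)))).
  exact (tr_irr B _ _ b).
Qed.

Lemma bW_ImS_tr_sym {w w' : Wset B} (g : w =s= w') (s' : ImS w') :
  bW w (ImS_tr (ssym g) s') =s= bW w' s'.
Proof. exact (DWbr g (existT _ _ (existT _ s' (tr_loop _ _ s')))). Qed.

Context {C : setoid}.

Definition CohMaps_tr {w w' : Wset B} (g : w =s= w') (F : CohMaps C w) :
  CohMaps C w'.
Proof.
  refine (existT _ (fun s' => comp (projT1 F (ImS_tr (ssym g) s'))
                                  (ImS_tr (ssym (bW_ImS_tr_sym g s')))) _).
  intros s1 s2 sg t; simpl.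
  pose (sg_w := strans (s := Wset B) (bW_ImS_tr_sym g s1)
                  (strans (s := Wset B) sg (ssym (bW_ImS_tr_sym g s2)))
          : ImS_tr (ssym g) s1 =s= ImS_tr (ssym g) s2).
  refine (strans (projT2 F _ _ sg_w _) _); simpl.
  apply (ap_ext (projT1 F _)), (ap_ext (eW _)), tr_path_irr.
Defined.

Variable aC : ext (PB B C) C.

Lemma recst_CohMaps_tr {w w' : Wset B} (g : w =s= w') (F : CohMaps C w) :
  @eqv (ext_setoid _ _) (comp (recst aC F) (ImS_tr (ssym g)))
       (recst aC (CohMaps_tr g F)).
Proof.
  intro s'; apply (ap_ext aC); exists (ap_ext (nW B) (bW_ImS_tr_sym g s')).
  intro b; simpl; apply (ap_ext (projT1 F _)), (ap_ext (eW _)).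
  exact (ssym (tr_loop _ _ b)).
Qed.

Lemma RecDef_tr_of_DW {i : RI B C}
    (e : DW (RI B C) (@RX _ _ _ aC) (@RY _ _ _ aC) (@Rd _ _ _ aC) i)
    {w' : Wset B} (g : projT1 i =s= w') :
  RecDef aC w' (comp (projT2 i) (ImS_tr (ssym g))).
Proof.
  revert w' g; induction e as [[w k] [F HkF] _ IH]; intros w' g.
  assert (HkF' : @eqv (ext_setoid _ _) (comp k (ImS_tr (ssym g)))
                      (recst aC (CohMaps_tr g F)))
    by exact (fun s' => strans (HkF _) (recst_CohMaps_tr g F s')).
  exact (dsup _ (existT _ (CohMaps_tr g F) HkF' : RX aC (existT _ w' _))
           (fun s' => IH (ImS_tr (ssym g) s') _ (bW_ImS_tr_sym g s'))).
Qed.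

End Transport.

Theorem lemma3p10 (A : setoid) (B : fam A) (C : setoid) (aC : ext (PB B C) C)
  (w w' : Wset B) (g : w =s= w') (k : ext (ImS w) C) :
  RecDef aC w k -> RecDef aC w' (comp k (ImS_tr (ssym g))).
Proof. intro e; exact (RecDef_tr_of_DW aC e g). Qed.
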